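(* Assume (A) holds. There exists a constant $c>0$ depending only on the data of (A) such that for every $T>0$, all $t\in[-T,T]$ and all $\mathbf{p}\in\mathbb{R}^N$: $$\int_0^1\int_{\mathbb{S}^{d-1}}|\langle\mathbb{M}_t\mathbf{p},e^{vA}B\sigma\mathbf{s}\rangle|^\alpha\mu(d\mathbf{s})\,dv\ge c|\mathbb{M}_t\mathbf{p}|^\alpha.$$
   Context: Setting: $1\le d<N$, $n\ge1$, $d_1=d\ge\dots\ge d_n>0$, $N=\sum_id_i$; $\alpha\in(0,2)$; $\mu$ is the spectral measure on $\mathbb{S}^{d-1}$ of a symmetric $\alpha$-stable Lévy measure on $\mathbb{R}^d$. Assumption (A): (UE) $\sigma\in\mathbb{R}^{d\times d}$ with $\kappa^{-1}|x|^2\le\langle\sigma\sigma^*x,x\rangle\le\kappa|x|^2$; (ND) $\eta^{-1}|\lambda|^\alpha\le\int_{\mathbb{S}^{d-1}}|\langle\lambda,s\rangle|^\alpha\mu(ds)\le\eta|\lambda|^\alpha$ for all $\lambda\in\mathbb{R}^d$; (H) $A\in\mathbb{R}^{N\times N}$ is a block matrix whose only nonzero blocks are $A_{i,i-1}\in\mathbb{R}^{d_i\times d_{i-1}}$, $i=2,\dots,n$, each of rank $d_i$. $B=(I_{d\times d},0,\dots,0)^T\in\mathbb{R}^{N\times d}$. $\mathbb{M}_t=\mathrm{diag}(I_{d_1\times d_1},tI_{d_2\times d_2},\dots,t^{n-1}I_{d_n\times d_n})$. *)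

From HB Require Import structures.
From mathcomp Require Import all_boot all_order all_algebra.
From mathcomp Require Import all_classical all_reals all_analysis.
Set Implicit Arguments. Unset Strict Implicit. Unset Printing Implicit Defensive.
Import Order.TTheory GRing.Theory Num.Theory.
Import numFieldNormedType.Exports.
Local Open Scope classical_set_scope.
Local Open Scope ring_scope.

Section defs.
Variable R : realType.

Definition dotv m (x y : 'cV[R]_m) : R := \sum_(k < m) x k 0 * y k 0.
Definition enorm m (x : 'cV[R]_m) : R := Num.sqrt (dotv x x).

(** A d-tuple (the measurable model of R^d, with the product = Borel
    sigma-algebra) seen as a column vector. *)
Definition tup2cv d (s : d.-tuple R) : 'cV[R]_d := \col_k tnth s k.

Definition usphere d : set (d.-tuple R) := [set s | enorm (tup2cv s) = 1].

Definition expmx N (M : 'M[R]_N) : 'M[R]_N :=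
  limn (fun m : nat => \sum_(k < m) (k`!%:R)^-1 *: M ^+ k).

Definition blockA n (dd : 'I_n -> nat) (Ab : forall i j, 'M[R]_(dd i, dd j))
  : 'M[R]_(\sum_i dd i) := \mxblock_(i < n, j < n) Ab i j.

Definition Bmx n (dd : 'I_n.+1 -> nat) : 'M[R]_(\sum_i dd i, dd ord0) :=
  \matrix_(k, l) ((k : nat) == (l : nat))%:R.

Definition Mt n (dd : 'I_n -> nat) (t : R) : 'M[R]_(\sum_i dd i) :=
  \mxdiag_(i < n) ((t ^+ i)%:M : 'M[R]_(dd i)).

End defs.
Arguments usphere {R} d.
Arguments Bmx {R n} dd.
Arguments Mt {R n} dd t.

(* Since A is nilpotent, v |-> (e^{vA} B sigma)^T q = W(q) (1, v, ..., v^n)^T is a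
   polynomial curve whose coefficient matrix W(q) depends linearly on q.  The
   rank conditions (H), a Kalman condition for the pair (A, B), and the
   invertibility of sigma from (UE) make q |-> W(q) injective, hence
   |q| <= C1 |W(q)|_1.  Cramer's rule for Vandermonde matrices on n+1 separated
   nodes in [0, 1] shows that such a curve stays above |W(q)|_1 / C on one of
   n+1 subintervals of fixed length h, and there (ND) bounds the inner integral
   from below by eta^-1 (|W(q)|_1 / C)^alpha.  The estimate holds with any
   vector in place of M_t p. *)

From HB Require Import structures.
From mathcomp Require Import all_boot all_order all_algebra.
From mathcomp Require Import all_classical all_reals all_analysis.
From mathcomp Require Import ring lra.
Import Order.TTheory GRing.Theory Num.Theory.
Import numFieldNormedType.Exports.

Set Implicit Arguments.
Unset Strict Implicit.
Unset Printing Implicit Defensive.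

Local Open Scope classical_set_scope.
Local Open Scope ring_scope.

Section Euclidean.
Variable R : realType.

Lemma dotvE m (x y : 'cV[R]_m) : dotv x y = (x^T *m y) 0 0.
Proof. by rewrite /dotv mxE; apply: eq_bigr => k _; rewrite mxE. Qed.

Lemma dotvC m (x y : 'cV[R]_m) : dotv x y = dotv y x.
Proof. by rewrite /dotv; apply: eq_bigr => k _; rewrite mulrC. Qed.

Lemma dotv_mulmx m p (M : 'M[R]_(m, p)) x y : dotv x (M *m y) = dotv (M^T *m x) y.
Proof. by rewrite !dotvE trmx_mul trmxK mulmxA. Qed.

Lemma dotvv_ge0 m (x : 'cV[R]_m) : 0 <= dotv x x.
Proof. by apply: sumr_ge0 => k _; rewrite -expr2 sqr_ge0. Qed.

Lemma enorm_ge0 m (x : 'cV[R]_m) : 0 <= enorm x.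
Proof. exact: sqrtr_ge0. Qed.

Lemma sqr_enorm m (x : 'cV[R]_m) : enorm x ^+ 2 = dotv x x.
Proof. by rewrite /enorm sqr_sqrtr // dotvv_ge0. Qed.

Lemma dotvv_eq0 m (x : 'cV[R]_m) : dotv x x = 0 -> x = 0.
Proof.
move=> /eqP; rewrite /dotv psumr_eq0 => [/allP x0|k _]; last by rewrite -expr2 sqr_ge0.
apply/matrixP => k l; rewrite ord1 mxE.
by have /implyP/(_ isT) := x0 k (mem_index_enum _); rewrite -expr2 sqrf_eq0 => /eqP.
Qed.

Lemma normr_entry_le_enorm m (x : 'cV[R]_m) k : `|x k 0| <= enorm x.
Proof.
rewrite /enorm -sqrtr_sqr ler_wsqrtr // /dotv (bigD1 k) //= -expr2 lerDl.
by apply: sumr_ge0 => i _; rewrite -expr2 sqr_ge0.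
Qed.

Lemma enorm_le_sum_normr m (x : 'cV[R]_m) : enorm x <= \sum_k `|x k 0|.
Proof.
have s_ge0 : 0 <= \sum_k `|x k 0| by apply: sumr_ge0.
rewrite /enorm -(ger0_norm s_ge0) -sqrtr_sqr ler_wsqrtr // /dotv.
pose P (a b : R) := a <= b ^+ 2 /\ 0 <= b.
suff [] : P (\sum_(k < m) x k 0 * x k 0) (\sum_k `|x k 0|) by [].
apply: (big_rec2 P) => [|k a b _ [IH b_ge0]]; first by split; rewrite ?expr0n.
split; last by rewrite addr_ge0.
rewrite sqrrD -expr2 real_normK ?num_real //.
have : 0 <= `|x k 0| * b *+ 2 by rewrite mulrn_wge0 // mulr_ge0.
lra.
Qed.

Lemma coercive_trmx_inj d (sigma : 'M[R]_d) kappa : 0 < kappa ->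
  (forall x : 'cV_d, kappa^-1 * enorm x ^+ 2 <= dotv (sigma *m sigma^T *m x) x) ->
  forall y : 'cV_d, sigma^T *m y = 0 -> y = 0.
Proof.
move=> kappa_gt0 coercive y sy0; apply: dotvv_eq0; apply/eqP.
have := coercive y; rewrite dotvC -mulmxA dotv_mulmx sy0 sqr_enorm.
rewrite [dotv 0 0]/dotv big1 => [|k _]; last by rewrite mxE mul0r.
by rewrite pmulr_rle0 ?invr_gt0 // => le0; rewrite eq_le le0 dotvv_ge0.
Qed.

End Euclidean.

Section PolynomialCurves.
Variable R : realType.

Definition powcol n (v : R) : 'cV[R]_n.+1 := \col_k v ^+ k.

Definition mxl1 m k (W : 'M[R]_(m, k)) : R := \sum_i \sum_j `|W i j|.

Lemma normr_det_le_fact m (M : 'M[R]_m) :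
  (forall a b, `|M a b| <= 1) -> `|\det M| <= m`!%:R.
Proof.
move=> M_le1; rewrite /determinant; apply: (le_trans (ler_norm_sum _ _ _)).
rewrite -perm.card_Sn -sumr_const; apply: ler_sum => s _.
rewrite normrM normrX normrN1 expr1n mul1r normr_prod.
by apply: prodr_ile1 => i _; rewrite normr_ge0 M_le1.
Qed.

Lemma Vandermonde_det_ge n (h : R) (x : 'I_n.+1 -> R) : 0 <= h ->
  (forall i j : 'I_n.+1, (i < j)%N -> h <= x j - x i) ->
  \prod_(i < n.+1) \prod_(j < n.+1 | (i < j)%N) h
    <= \det (Vandermonde n.+1 (\row_j x j)).
Proof.
move=> h_ge0 x_sep; rewrite det_Vandermonde.
apply: ler_prod => i _; apply/andP; split; first exact: prodr_ge0.
apply: ler_prod => j ij; rewrite h_ge0 !mxE; exact: x_sep.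
Qed.

(* Cramer's rule [det V * W = (W V) adj V] with [(W V)_j = W (powcol (x j))]
   and [|adj V| <= n!] since the nodes lie in [0, 1]. *)
Lemma mxl1_le_powcol d n (x : 'I_n.+1 -> R) (delta : R) (W : 'M[R]_(d, n.+1)) :
  (forall j, 0 <= x j <= 1) -> 0 < delta <= \det (Vandermonde n.+1 (\row_j x j)) ->
  delta * mxl1 W <= (d * n.+1)%:R * n`!%:R * \sum_j enorm (W *m powcol n (x j)).
Proof.
move=> x01 /andP[delta_gt0 delta_le].
set V := Vandermonde n.+1 (\row_j x j); set E := \sum_j _.
have cramer i k : \det V * W i k = \sum_j (W *m V) i j * \adj V j k.
  have := esym (mulmxA W V (\adj V)).
  by rewrite mul_mx_adj mul_mx_scalar => /matrixP /(_ i k); rewrite !mxE => ->.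
have adj_le j k : `|\adj V j k| <= n`!%:R.
  rewrite mxE /cofactor normrM normrX normrN1 expr1n mul1r.
  apply: normr_det_le_fact => a b; rewrite !mxE.
  have /andP[x_ge0 x_le1] := x01 (lift j b).
  by rewrite ger0_norm ?exprn_ge0 // exprn_ile1.
have WV_le i j : `|(W *m V) i j| <= enorm (W *m powcol n (x j)).
  have -> : (W *m V) i j = (W *m powcol n (x j)) i 0.
    by rewrite !mxE; apply: eq_bigr => k _; rewrite !mxE.
  exact: normr_entry_le_enorm.
have entry_le i k : delta * `|W i k| <= n`!%:R * E.
  apply: le_trans (_ : \det V * `|W i k| <= _); first by rewrite ler_wpM2r.
  rewrite -(ger0_norm (le_trans (ltW delta_gt0) delta_le)) -normrM cramer.
  apply: (le_trans (ler_norm_sum _ _ _)); rewrite /E mulr_sumr.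
  by apply: ler_sum => j _; rewrite normrM mulrC ler_pM.
rewrite /mxl1 mulr_sumr.
apply: le_trans (_ : \sum_(i < d) \sum_(k < n.+1) (n`!%:R * E) <= _).
  by apply: ler_sum => i _; rewrite mulr_sumr; apply: ler_sum => k _.
by rewrite !sumr_const !card_ord -mulrnA -(mulr_natl (n`!%:R * E)) mulnC mulrA.
Qed.

Lemma pigeonhole_intervals n (e : R -> R) (h S K : R) (a : 'I_n.+1 -> R) : 0 < K ->
  (forall x : 'I_n.+1 -> R, (forall j, a j <= x j <= a j + h) ->
     S <= K * \sum_j e (x j)) ->
  exists j, forall v, a j <= v <= a j + h -> S / (K * n.+1%:R) <= e v.
Proof.
move=> K_gt0 S_le; apply: contrapT => /forallNP no_j.
have small j : exists v, a j <= v <= a j + h /\ e v < S / (K * n.+1%:R).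
  have /existsNP [v /not_implyP [hv lt]] := no_j j.
  by exists v; split => //; rewrite ltNge; apply/negP.
have [x x_small] := choice small.
have := S_le x (fun j => (x_small j).1).
have : \sum_j e (x j) < \sum_(j < n.+1) S / (K * n.+1%:R).
  apply: ltr_sum => [|j _]; last exact: (x_small j).2.
  by apply/hasP; exists ord0; rewrite ?mem_index_enum.
rewrite sumr_const card_ord -(ltr_pM2l K_gt0) => lt le.
have KS : K * (S / (K * n.+1%:R) *+ n.+1) = S.
  by rewrite -mulr_natr; field; rewrite addrC natr1 pnatr_eq0 (gt_eqF K_gt0).
by have := le_lt_trans le lt; rewrite KS ltxx.
Qed.

Lemma powcol_lower_bound d n : (0 < d)%N ->
  exists h C : R, [/\ 0 < h, 0 < C &
    forall W : 'M[R]_(d, n.+1), exists2 a, 0 <= a /\ a + h <= 1 &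
      forall v, a <= v <= a + h -> mxl1 W <= C * enorm (W *m powcol n v)].
Proof.
(* The n+1 intervals [2jh, (2j+1)h], h = 1/(2n+1), fit in [0, 1] and are h apart. *)
move=> d_gt0; pose h : R := ((2 * n).+1%:R)^-1.
have h_gt0 : 0 < h by rewrite invr_gt0 ltr0n.
pose a (j : 'I_n.+1) : R := (2 * j)%:R * h.
have a_ge0 j : 0 <= a j by rewrite mulr_ge0 // ltW.
have a_le1 j : a j + h <= 1.
  rewrite -[X in _ + X]mul1r -mulrDl natr1 ler_pdivrMr ?ltr0n // mul1r ler_nat.
  by rewrite ltnS leq_mul2l -ltnS ltn_ord orbT.
have a_sep (i j : 'I_n.+1) : (i < j)%N -> a i + 2 * h <= a j.
  move=> ij; rewrite /a -mulrDl; apply: ler_wpM2r; first exact: ltW.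
  by rewrite -natrD ler_nat -mulnSr leq_mul2l ij orbT.
pose delta := \prod_(i < n.+1) \prod_(j < n.+1 | (i < j)%N) h.
have delta_gt0 : 0 < delta by apply: prodr_gt0 => i _; apply: prodr_gt0.
pose K := (d * n.+1)%:R * n`!%:R / delta.
have K_gt0 : 0 < K.
  by rewrite divr_gt0 // mulr_gt0 // ltr0n ?fact_gt0 // muln_gt0 d_gt0.
have C_gt0 : 0 < K * n.+1%:R by rewrite mulr_gt0 ?ltr0n.
exists h, (K * n.+1%:R); split => //.
move=> W; pose e v := enorm (W *m powcol n v).
have [|j e_ge] := @pigeonhole_intervals n e h (mxl1 W) K a K_gt0.
  move=> x x_in; rewrite /K mulrAC ler_pdivlMr // mulrC.
  apply: mxl1_le_powcol => [j|]; last first.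
    rewrite delta_gt0; apply: Vandermonde_det_ge => [|i j ij]; first exact: ltW.
    have := x_in i; have := x_in j; have := a_sep i j ij; lra.
  have := x_in j; have := a_ge0 j; have := a_le1 j; lra.
by exists (a j) => // v v_in; rewrite mulrC -ler_pdivrMr //; apply: e_ge.
Qed.

End PolynomialCurves.

(* No measurability is needed: the integral of a nonnegative function is the
   supremum of the integrals of the simple functions below it. *)
Lemma ge0_le_integral_nonmeasurable d (T : measurableType d) (R : realType)
    (mu : measure T R) (D : set T) (f1 f2 : T -> \bar R) :
  (forall x, D x -> (0 <= f1 x)%E) -> (forall x, D x -> (f1 x <= f2 x)%E) ->
  (\int[mu]_(x in D) f1 x <= \int[mu]_(x in D) f2 x)%E.
Proof.
move=> f1_ge0 f12.
have f2_ge0 x : D x -> (0 <= f2 x)%E.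
  by move=> Dx; apply: le_trans (f1_ge0 x Dx) (f12 x Dx).
rewrite (ge0_integralE _ f1_ge0) (ge0_integralE _ f2_ge0) /=.
apply: ereal_sup_le => _ [g g_le <-]; exists g => // x.
apply: le_trans (g_le x) _; rewrite /patch; case: ifP => // /set_mem Dx.
exact: f12.
Qed.

Lemma integral01_ge_subinterval (R : realType) (F : R -> \bar R) (a h c : R) :
  0 <= a -> 0 < h -> a + h <= 1 -> 0 <= c ->
  (forall v, 0 <= v <= 1 -> (0 <= F v)%E) ->
  (forall v, a <= v <= a + h -> (c%:E <= F v)%E) ->
  ((c * h)%:E <= \int[@lebesgue_measure R]_(v in `[0%R, 1%R]) F v)%E.
Proof.
move=> a_ge0 h_gt0 ah_le1 c_ge0 F_ge0 F_ge.
set J := `[a, a + h]%classic.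
have sub01 : J `<=` `[0%R, 1%R].
  by move=> v; rewrite /J /= !in_itv /= => /andP[av vb]; lra.
apply: (@le_trans _ _ (\int[@lebesgue_measure R]_(v in `[0%R, 1%R])
   (c * \1_J v)%:E)%E); last first.
  apply: ge0_le_integral_nonmeasurable => [v _|v v01].
    by rewrite lee_fin mulr_ge0.
  rewrite indicE; have [vJ|_] := boolP (v \in J).
    by rewrite mulr1; apply: F_ge; move: vJ; rewrite in_setE /J /= in_itv.
  by rewrite mulr0; apply: F_ge0; move: v01; rewrite /= in_itv.
have mJ : measurable J by exact: measurable_itv.
rewrite (integralZl_indic (m := @lebesgue_measure R) _ (fun _ => J) c) //; last first.
  by move=> /lt_le_trans /(_ c_ge0); rewrite ltxx.
rewrite integral_indic // setIidl // EFinM.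
have := lebesgue_measure_itv `[a, a + h]; rewrite /= lte_fin ltrDl h_gt0 /=.
by rewrite -EFinD addrAC subrr add0r => ->.
Qed.

Section MatrixPowers.
Variable R : realType.

Lemma trmxX N (M : 'M[R]_N) k : (M ^+ k)^T = M^T ^+ k.
Proof.
elim: k => [|k IH]; first by rewrite !expr0 trmx1.
by rewrite exprS -[M * _]/(M *m _) trmx_mul IH exprSr.
Qed.

Lemma exprZmx N (M : 'M[R]_N) (a : R) k : (a *: M) ^+ k = a ^+ k *: M ^+ k.
Proof.
elim: k => [|k IH]; first by rewrite !expr0 scale1r.
rewrite !exprS -[(a *: M) * _]/((a *: M) *m _) -[M * _]/(M *m _) IH.
by rewrite -scalemxAl -scalemxAr scalerA.
Qed.

Lemma expmx_nilpotent N (M : 'M[R]_N) k : M ^+ k = 0 ->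
  expmx M = \sum_(j < k) (j`!%:R)^-1 *: M ^+ j.
Proof.
move=> Mk0; rewrite /expmx; apply: norm_lim_near_cst; exists k => // m /= km.
rewrite -!(big_mkord xpredT (fun j => (j`!%:R)^-1 *: M ^+ j)).
rewrite (big_cat_nat (leq0n k) km) /= [X in _ + X]big_nat_cond.
rewrite [X in _ + X]big1 ?addr0 // => j /andP[/andP[kj _] _].
by rewrite -(subnKC kj) exprD Mk0 mul0r scaler0.
Qed.

End MatrixPowers.

Section ShiftBlocks.
Variables (R : realType) (n : nat) (dd : 'I_n.+1 -> nat).
Variable Ab : forall i j : 'I_n.+1, 'M[R]_(dd i, dd j).
Local Notation N := (\sum_i dd i)%N.
Local Notation At := (blockA Ab)^T.

Lemma trBmx_mul m (x : 'M[R]_(N, m)) : (Bmx dd)^T *m x = submxcol x ord0.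
Proof.
apply/matrixP => k l; set r := @tagnat.Rank n.+1 dd ord0 k.
have rk : (r : nat) = k by rewrite tagnat.RankEsum big_pred0 // => i; rewrite ltn0.
rewrite !mxE (bigD1 r) //= [X in _ + X]big1 => [|i ir].
  by rewrite !mxE rk eqxx mul1r addr0.
rewrite !mxE; case: eqP => [ik|]; last by rewrite mul0r.
by move: ir; rewrite (_ : i = r) ?eqxx //; apply: val_inj; exact: etrans ik (esym rk).
Qed.

Lemma submxcol_trblockA_mul m (x : 'M[R]_(N, m)) i :
  submxcol (At *m x) i = \sum_j (Ab j i)^T *m submxcol x j.
Proof. by rewrite /blockA tr_mxblock -{1}(submxcolK x) mul_mxblock_mxrow mxcolK. Qed.

Hypothesis Ab_sub : forall i j : 'I_n.+1, (i : nat) <> j.+1 -> Ab i j = 0.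

Lemma submxcol_trblockA_mul_succ m (x : 'M[R]_(N, m)) (i j : 'I_n.+1) :
  (j : nat) = i.+1 -> submxcol (At *m x) i = (Ab j i)^T *m submxcol x j.
Proof.
move=> ji; rewrite submxcol_trblockA_mul (bigD1 j) //= big1 ?addr0 // => k kj.
rewrite Ab_sub ?trmx0 ?mul0mx // => ki; move: kj; rewrite -val_eqE /= ji ki.
by rewrite eqxx.
Qed.

Lemma submxcol_trblockAX_mul k m (x : 'M[R]_(N, m)) (i : 'I_n.+1) :
  (n < i + k)%N -> submxcol (At ^+ k *m x) i = 0.
Proof.
elim: k x i => [|k IH] x i ik; first by move: ik; rewrite addn0 ltnNge -ltnS ltn_ord.
rewrite exprS -mulmxE -mulmxA submxcol_trblockA_mul big1 // => j _.
have [ji|ji] := eqVneq (j : nat) i.+1; last by rewrite Ab_sub ?trmx0 ?mul0mx //; apply/eqP.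
by rewrite IH ?mulmx0 // ji addSn -addnS.
Qed.

Lemma blockA_nilpotent : blockA Ab ^+ n.+1 = 0.
Proof.
apply: trmx_inj; rewrite trmxX trmx0 -[_ ^+ _]mulmx1.
apply/mxcolP => i; rewrite submxcol0 submxcol_trblockAX_mul //.
by rewrite addnS ltnS leq_addl.
Qed.

Hypothesis Ab_rank : forall i j : 'I_n.+1, (i : nat) = j.+1 -> \rank (Ab i j) = dd i.

Lemma trAb_mul_eq0 (i j : 'I_n.+1) m (z : 'M[R]_(dd i, m)) : (i : nat) = j.+1 ->
  (Ab i j)^T *m z = 0 -> z = 0.
Proof.
move=> ij z0; have Ab_free : row_free (Ab i j) by rewrite /row_free Ab_rank.
apply: trmx_inj; rewrite trmx0; apply: (row_free_inj Ab_free).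
by rewrite mul0mx -(trmxK (Ab i j)) -trmx_mul z0 trmx0.
Qed.

Lemma blockA_controllable_block k (i : 'I_n.+1) m (x : 'M[R]_(N, m)) :
  (i : nat) = k -> (forall l, (l <= k)%N -> (Bmx dd)^T *m (At ^+ l *m x) = 0) ->
  submxcol x i = 0.
Proof.
elim: k i x => [|k IH] i x ik Bx0.
  have -> : i = ord0 by apply: val_inj.
  by have := Bx0 0%N (leq0n _); rewrite expr0 mul1mx trBmx_mul.
have k_lt : (k < n.+1)%N by apply: ltn_trans (ltn_ord i); rewrite ik.
have ik' : (i : nat) = (inord k : 'I_n.+1).+1 by rewrite inordK.
apply: (trAb_mul_eq0 ik'); rewrite -submxcol_trblockA_mul_succ //.
apply: IH; first by rewrite inordK.
move=> l lk; rewrite (mulmxA (At ^+ l)) -[At ^+ l *m At]/(At ^+ l * At) -exprSr.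
by apply: Bx0; rewrite ltnS.
Qed.

Lemma blockA_controllable m (x : 'M[R]_(N, m)) :
  (forall l, (l <= n)%N -> (Bmx dd)^T *m (At ^+ l *m x) = 0) -> x = 0.
Proof.
move=> Bx0; apply/mxcolP => i; rewrite submxcol0.
apply: (blockA_controllable_block (erefl (i : nat))) => l li.
by apply: Bx0; rewrite (leq_trans li) // -ltnS.
Qed.

End ShiftBlocks.

Lemma enorm_le_injective_functionals (R : realType) (P : finType) N
    (M : P -> 'rV[R]_N) :
  (forall q : 'cV_N, (forall p, M p *m q = 0) -> q = 0) ->
  exists2 C, 0 < C & forall q : 'cV_N, enorm q <= C * \sum_p `|(M p *m q) 0 0|.
Proof.
move=> M_inj; pose Mb : 'M[R]_(#|{: P}|, N) := \matrix_(k, l) M (enum_val k) 0 l.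
have MbE (q : 'cV_N) k : (Mb *m q) k 0 = (M (enum_val k) *m q) 0 0.
  by rewrite !mxE; apply: eq_bigr => l _; rewrite mxE.
have Mb_free : row_free Mb^T.
  apply: inj_row_free => v /(congr1 trmx); rewrite trmx_mul trmxK trmx0 => Mbv0.
  apply: trmx_inj; rewrite trmx0; apply: M_inj => p; apply/rowP => z.
  by rewrite ord1 -[p]enum_rankK -MbE Mbv0 !mxE.
have [L MbL] := row_freeP Mb_free.
have LMb : L^T *m Mb = 1%:M by rewrite -(trmxK Mb) -trmx_mul MbL trmx1.
pose C := \sum_a \sum_k `|L^T a k|.
have C_ge0 : 0 <= C by apply: sumr_ge0 => a _; apply: sumr_ge0.
exists (C + 1); first by rewrite ltr_pwDr.
move=> q; set Y := \sum_p _.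
have YE : Y = \sum_k `|(Mb *m q) k 0|.
  under [RHS]eq_bigr do rewrite MbE.
  rewrite -(big_enum_val (A := {: P}) (fun p => `|(M p *m q) 0 0|)).
  by apply: eq_bigl => p.
have qE : q = L^T *m (Mb *m q) by rewrite mulmxA LMb mul1mx.
apply: (le_trans (enorm_le_sum_normr q)); rewrite mulrDl mul1r.
apply: (@le_trans _ _ (C * Y)); last by rewrite lerDl /Y sumr_ge0.
rewrite /C mulr_suml; apply: ler_sum => a _.
rewrite {1}qE mxE; apply: (le_trans (ler_norm_sum _ _ _)).
rewrite mulr_suml; apply: ler_sum => k _; rewrite normrM ler_wpM2l //.
by rewrite YE (bigD1 k) //= lerDl sumr_ge0.
Qed.

Section CoefficientMatrix.
Variables (R : realType) (n : nat) (dd : 'I_n.+1 -> nat).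
Variables (Ab : forall i j : 'I_n.+1, 'M[R]_(dd i, dd j)) (sigma : 'M[R]_(dd ord0)).
Local Notation N := (\sum_i dd i)%N.
Local Notation A := (blockA Ab).

Definition coefmx (q : 'cV[R]_N) : 'M[R]_(dd ord0, n.+1) :=
  \matrix_(i, k) ((k`!%:R)^-1 * (sigma^T *m (Bmx dd)^T *m A^T ^+ k *m q) i 0).

Hypothesis Ab_sub : forall i j : 'I_n.+1, (i : nat) <> j.+1 -> Ab i j = 0.

Lemma trexpmx_mul_coefmx (q : 'cV[R]_N) (v : R) :
  (expmx (v *: A) *m Bmx dd *m sigma)^T *m q = coefmx q *m powcol n v.
Proof.
have vA_nil : (v *: A) ^+ n.+1 = 0 by rewrite exprZmx blockA_nilpotent ?scaler0.
rewrite (expmx_nilpotent vA_nil) !trmx_mul !mulmxA.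
have -> : (\sum_(j < n.+1) j`!%:R^-1 *: (v *: A) ^+ j)^T =
    \sum_(j < n.+1) (j`!%:R^-1 * v ^+ j) *: A^T ^+ j.
  apply/matrixP => a b; rewrite !mxE !summxE; apply: eq_bigr => j _.
  by rewrite exprZmx -trmxX !mxE mulrA.
rewrite mulmx_sumr mulmx_suml.
apply/matrixP => i l; rewrite ord1 !mxE summxE; apply: eq_bigr => k _.
by rewrite -scalemxAr -scalemxAl !mxE -!mulrA [v ^+ k * _]mulrC.
Qed.

Hypothesis Ab_rank : forall i j : 'I_n.+1, (i : nat) = j.+1 -> \rank (Ab i j) = dd i.
Hypothesis sigma_inj : forall y : 'cV[R]_(dd ord0), sigma^T *m y = 0 -> y = 0.

Lemma coefmx_eq0 (q : 'cV[R]_N) : coefmx q = 0 -> q = 0.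
Proof.
move=> W0; apply: (blockA_controllable Ab_sub Ab_rank) => k k_le.
apply: sigma_inj; apply/matrixP => i l; rewrite ord1 !mulmxA [RHS]mxE.
have /matrixP /(_ i (inord k)) := W0; rewrite !mxE inordK //.
by move=> /eqP; rewrite mulf_eq0 invr_eq0 pnatr_eq0 eqn0Ngt fact_gt0 => /eqP.
Qed.

Lemma enorm_le_mxl1_coefmx :
  exists2 C, 0 < C & forall q : 'cV[R]_N, enorm q <= C * mxl1 (coefmx q).
Proof.
pose M (p : 'I_(dd ord0) * 'I_n.+1) :=
  row p.1 ((p.2`!%:R)^-1 *: (sigma^T *m (Bmx dd)^T *m A^T ^+ p.2)).
have ME q p : (M p *m q) 0 0 = coefmx q p.1 p.2.
  by rewrite -row_mul !mxE mulr_sumr; apply: eq_bigr => l _; rewrite !mxE mulrA.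
have [|C C_gt0 le_C] := @enorm_le_injective_functionals R _ N M.
  move=> q Mq0; apply: coefmx_eq0; apply/matrixP => i k.
  by rewrite -[in LHS](ME q (i, k)) Mq0 !mxE.
exists C => // q; rewrite /mxl1 pair_big /=.
by under [X in _ * X]eq_bigr do rewrite -ME.
Qed.

End CoefficientMatrix.

Section TimeAveragedNondegeneracy.
Variables (R : realType) (n : nat) (dd : 'I_n.+1 -> nat).
Variables (Ab : forall i j : 'I_n.+1, 'M[R]_(dd i, dd j)) (sigma : 'M[R]_(dd ord0)).
Variables (alpha eta : R) (mu : {measure set (dd ord0).-tuple R -> \bar R}).
Local Notation N := (\sum_i dd i)%N.

Hypotheses (d_gt0 : (0 < dd ord0)%N) (alpha_gt0 : 0 < alpha) (eta_gt0 : 0 < eta).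
Hypothesis ND : forall lam, ((eta^-1 * enorm lam `^ alpha)%:E <=
  \int[mu]_(s in usphere (dd ord0)) (`|dotv lam (tup2cv s)| `^ alpha)%:E)%E.
Hypothesis Ab_sub : forall i j : 'I_n.+1, (i : nat) <> j.+1 -> Ab i j = 0.
Hypothesis Ab_rank : forall i j : 'I_n.+1, (i : nat) = j.+1 -> \rank (Ab i j) = dd i.
Hypothesis sigma_inj : forall y : 'cV[R]_(dd ord0), sigma^T *m y = 0 -> y = 0.

Lemma integral_expmx_ge : exists2 c, 0 < c & forall q : 'cV[R]_N,
  ((c * enorm q `^ alpha)%:E <=
   \int[@lebesgue_measure R]_(v in `[0%R, 1%R])
     \int[mu]_(s in usphere (dd ord0))
       (`|dotv q (expmx (v *: blockA Ab) *m Bmx dd *m sigma *m tup2cv s)| `^ alpha)%:E)%E.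
Proof.
have [C1 C1_gt0 le_q] := enorm_le_mxl1_coefmx Ab_sub Ab_rank sigma_inj.
have [h [C [h_gt0 C_gt0 le_W]]] := powcol_lower_bound R n d_gt0.
pose K := C1 * C; have K_gt0 : 0 < K by rewrite mulr_gt0.
have Kinv_ge0 : 0 <= K^-1 by rewrite invr_ge0 ltW.
exists (eta^-1 * h * K^-1 `^ alpha).
  by rewrite mulr_gt0 ?powR_gt0 ?mulr_gt0 ?invr_gt0.
move=> q; set W := coefmx Ab sigma q; have [a [a_ge0 ah_le1] W_le] := le_W W.
apply: le_trans (integral01_ge_subinterval
  (c := eta^-1 * (K^-1 * enorm q) `^ alpha) a_ge0 h_gt0 ah_le1 _ _ _).
- by rewrite lee_fin powRM ?enorm_ge0 // [X in _ <= X]mulrAC -!mulrA.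
- by rewrite mulr_ge0 ?powR_ge0 // invr_ge0 ltW.
- by move=> v _; apply: integral_ge0 => s _; rewrite lee_fin powR_ge0.
move=> v v_in; under eq_integral do rewrite dotv_mulmx trexpmx_mul_coefmx //.
apply: le_trans (ND _); rewrite lee_fin.
apply: ler_wpM2l; first by rewrite invr_ge0 ltW.
have q_le : K^-1 * enorm q <= enorm (W *m powcol n v).
  rewrite ler_pdivrMl // (le_trans (le_q q)) // /K -mulrA.
  by apply: ler_wpM2l; [exact: ltW | exact: W_le].
apply: (ge0_ler_powR (ltW alpha_gt0) _ _ q_le); rewrite nnegrE ?enorm_ge0 //.
exact: mulr_ge0 Kinv_ge0 (enorm_ge0 q).
Qed.

End TimeAveragedNondegeneracy.

Theorem lemmaA1 (R : realType) (n : nat) (dd : 'I_n.+1 -> nat)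
  (alpha : R) (kappa eta : R)
  (mu : {finite_measure set (dd ord0).-tuple R -> \bar R})
  (sigma : 'M[R]_(dd ord0))
  (Ab : forall i j : 'I_n.+1, 'M[R]_(dd i, dd j)) :
  (* dimensions *)
  (1 <= dd ord0)%N ->
  (dd ord0 < \sum_i dd i)%N ->
  (forall i j : 'I_n.+1, (i <= j)%N -> (dd j <= dd i)%N) ->
  (forall i, (0 < dd i)%N) ->
  (* alpha in (0,2) *)
  0 < alpha < 2 ->
  (* mu : symmetric finite measure concentrated on the usphere S^{d-1} *)
  mu (~` usphere (dd ord0)) = 0%E ->
  (forall S : set ((dd ord0).-tuple R), measurable S ->
     mu [set s : (dd ord0).-tuple R | S (map_tuple (fun x : R => - x) s)] = mu S) ->
  (* (UE) *)
  0 < kappa ->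
  (forall x : 'cV[R]_(dd ord0),
     kappa^-1 * enorm x ^+ 2 <= dotv (sigma *m sigma^T *m x) x
     <= kappa * enorm x ^+ 2) ->
  (* (ND) *)
  0 < eta ->
  (forall lam : 'cV[R]_(dd ord0),
     ((eta^-1 * enorm lam `^ alpha)%:E
        <= \int[mu]_(s in usphere (dd ord0)) (`|dotv lam (tup2cv s)| `^ alpha)%:E)%E
     /\ (\int[mu]_(s in usphere (dd ord0)) (`|dotv lam (tup2cv s)| `^ alpha)%:E
        <= (eta * enorm lam `^ alpha)%:E)%E) ->
  (* (H) *)
  (forall i j : 'I_n.+1, (i : nat) <> j.+1 -> Ab i j = 0) ->
  (forall i j : 'I_n.+1, (i : nat) = j.+1 -> \rank (Ab i j) = dd i) ->
  exists c : R, 0 < c /\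
    forall T : R, 0 < T -> forall t : R, -T <= t <= T ->
    forall p : 'cV[R]_(\sum_i dd i),
      ((c * enorm (Mt dd t *m p) `^ alpha)%:E <=
       \int[@lebesgue_measure R]_(v in `[0%R, 1%R]%classic)
         \int[mu]_(s in usphere (dd ord0))
           (`| dotv (Mt dd t *m p)
                 (expmx (v *: blockA Ab) *m Bmx dd *m sigma *m tup2cv s) |
              `^ alpha)%:E)%E.
Proof.
move=> d_gt0 _ _ _ /andP[alpha_gt0 _] _ _ kappa_gt0 UE eta_gt0 ND Ab_sub Ab_rank.
have sigma_inj := coercive_trmx_inj kappa_gt0 (fun x => proj1 (andP (UE x))).
have [c c_gt0 le_c] := integral_expmx_ge (mu := mu) d_gt0 alpha_gt0 eta_gt0
  (fun lam => (ND lam).1) Ab_sub Ab_rank sigma_inj.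
exists c; split; first exact: c_gt0.
by move=> T _ t _ p; exact: le_c.
Qed.
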